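(* Let $m\ge1$, $q=2^m$, let $n$ be odd, and let $L$ and $\lambda$ be $2$-linear polynomials over $\mathbb F_{q^n}$. Assume that $\mathrm{Tr}(x^{q+1})+L(x)$ is a permutation polynomial of $\mathbb F_{q^n}$. Then $|\ker L|\le q$, and moreover: (i) if $\lambda^\prime(\ker\mathrm{Tr})=\ker\mathrm{Tr}$ and $\mathrm{Tr}(\lambda^\prime(x))=\mathrm{Tr}(x)$ for all $x\in\mathbb F_{q^n}$, then both $\mathrm{Tr}(x^{q+1})+L(\lambda(x))$ and $\mathrm{Tr}(x^{q+1})+\lambda(L(x))$ are permutation polynomials of $\mathbb F_{q^n}$; (ii) if $x\mapsto x+\mathrm{Tr}(\lambda^\prime(x))$ is a permutation of $\mathbb F_q$, then both \[\mathrm{Tr}(x^{q+1})+L(x)+L(\mathrm{Tr}(\lambda(x)))+\mathrm{Tr}(\lambda(x))^2\] and \[\mathrm{Tr}(x^{q+1})+L(x)+\mathrm{Tr}(\lambda(L(x)))+\mathrm{Tr}(\lambda(x^2))\] are permutation polynomials of $\mathbb F_{q^n}$.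
   Context: $\mathrm{Tr}$ denotes the trace map of $\mathbb F_{q^n}$ over $\mathbb F_q$. A $2$-linear polynomial over $\mathbb F_{q^n}$ has the form $\sum_{j=0}^{mn-1}a_jx^{2^j}$; its adjoint is $\sum_j(a_jx)^{2^{-j}}$, where $y\mapsto y^{2^{-j}}$ is the inverse of $y\mapsto y^{2^j}$ on $\mathbb F_{q^n}$. Polynomials are regarded as maps on $\mathbb F_{q^n}$; $\ker$ denotes the kernel of an additive map. *)

From mathcomp Require Import all_boot all_order all_algebra all_field.
Set Implicit Arguments. Unset Strict Implicit. Unset Printing Implicit Defensive.
Import GRing.Theory.
Local Open Scope ring_scope.

Definition Tr (F : finFieldType) (q n : nat) (x : F) : F :=
  \sum_(i < n) x ^+ (q ^ i).

Definition lin2 (F : finFieldType) (N : nat) (a : 'I_N -> F) (x : F) : F :=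
  \sum_(j < N) a j * x ^+ (2 ^ j).

(* Its adjoint sum_j (a_j x)^{2^{-j}}; when #|F| = 2^N, the inverse of
   y |-> y^{2^j} is y |-> y^{2^(N-j)}. *)
Definition adj2 (F : finFieldType) (N : nat) (a : 'I_N -> F) (x : F) : F :=
  \sum_(j < N) (a j * x) ^+ (2 ^ (N - j)).

Definition kerF (F : finFieldType) (f : F -> F) : {set F} := [set x | f x == 0].

From mathcomp Require Import all_boot all_order all_algebra all_field.
From mathcomp Require Import ring.

(* Put Q(x) = Tr(x^(q+1)).  Then Q(x + a) = Q(x) + Q(a) + Tr(x (a^q + a^(q^(n-1)))), and
   as n is odd the coefficient a^q + a^(q^(n-1)) vanishes exactly for a in F_q, where
   Q(a) = a^2.  Since Tr maps onto F_q, for additive M the map Q + M is thus injective iff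
   every a <> 0 has M(a) <> a^2 if a is in F_q, and M(a) outside F_q otherwise.  This
   criterion puts ker L inside F_q, and it passes from L to the new maps once the
   hypotheses on lambda' are read through the absolute-trace duality
   Tr_2(y lambda(x)) = Tr_2(lambda'(y) x): in (i) they make lambda injective and the
   identity on F_q, in (ii) they give v + Tr(lambda(v)) <> 0 for every v in F_q^*. *)

Set Implicit Arguments. Unset Strict Implicit. Unset Printing Implicit Defensive.
Import GRing.Theory.
Local Open Scope ring_scope.

Lemma exists_sum_expr_neq0 (F : finFieldType) (r k : nat) :
  (1 < r)%N -> (0 < k)%N -> (r ^ k.-1 < #|F|)%N ->
  exists x : F, \sum_(i < k) x ^+ (r ^ i) != 0.
Proof.
move=> r_gt1 k_gt0 ltF; pose p : {poly F} := \sum_(i < k) 'X^(r ^ i).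
have pE x : p.[x] = \sum_(i < k) x ^+ (r ^ i).
  by rewrite horner_sum; apply: eq_bigr => i _; rewrite hornerXn.
have top : (k.-1 < k)%N by rewrite ltn_predL.
have p_lead : p`_(r ^ k.-1) = 1.
  rewrite coef_sum (bigD1 (Ordinal top)) //= coefXn eqxx big1 ?addr0 // => i.
  by rewrite -val_eqE /= coefXn eqn_exp2l // eq_sym => /negbTE ->.
have p_neq0 : p != 0.
  by apply/eqP => p0; move: p_lead; rewrite p0 coef0 => /esym/eqP; rewrite oner_eq0.
have p_size : (size p <= (r ^ k.-1).+1)%N.
  apply: leq_trans (size_sum _ _ _) _; apply/bigmax_leqP => i _.
  by rewrite size_polyXn ltnS leq_exp2l // -ltnS prednK.
apply/existsP; apply: contraT; rewrite negb_exists => /forallP p_roots.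
have := max_poly_roots p_neq0 (rs := enum F) _ (enum_uniq _).
rewrite -cardE => /(_ _)/leq_trans/(_ p_size); rewrite ltnS leqNgt ltF; apply.
by apply/allP => x _; rewrite /root pE; have := p_roots x; rewrite negbK.
Qed.

Lemma card_expr_fixed (F : finFieldType) (r : nat) :
  (1 < r)%N -> (#|[set x : F | x ^+ r == x]| <= r)%N.
Proof.
move=> r_gt1; pose p : {poly F} := 'X^r - 'X.
have p_size : size p = r.+1.
  by rewrite size_polyDl ?size_polyXn // size_polyN size_polyX ltnS.
have p_neq0 : p != 0 by rewrite -size_poly_eq0 p_size.
have := max_poly_roots p_neq0 (rs := enum [set x : F | x ^+ r == x]) _ (enum_uniq _).
rewrite -cardE p_size ltnS; apply; apply/allP => x.
by rewrite mem_enum inE /root /p !hornerE => /eqP ->; rewrite subrr.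
Qed.

Lemma morphD_inj (U V : zmodType) (f : U -> V) :
  {morph f : x y / x + y} -> (forall x, f x = 0 -> x = 0) -> injective f.
Proof.
move=> fD f_ker x y fxy; have f0 : f 0 = 0 by apply: (@addrI _ (f 0)); rewrite -fD !addr0.
have fN z : f (- z) = - f z by apply/eqP; rewrite -addr_eq0 -fD addNr f0.
by apply/subr0_eq/f_ker; rewrite fD fN fxy subrr.
Qed.

Lemma fixed_exprn (R : pzSemiRingType) (r j : nat) (c : R) :
  c ^+ r = c -> c ^+ (r ^ j) = c.
Proof. by move=> cr; elim: j => [|j IHj]; rewrite ?expr1 // expnSr exprM IHj. Qed.

Lemma expr_sum_pchar (R : comNzRingType) (e : nat) (I : Type) (s : seq I)
    (P : pred I) (f : I -> R) :
  [pchar R].-nat e -> (\sum_(i <- s | P i) f i) ^+ e = \sum_(i <- s | P i) f i ^+ e.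
Proof.
move=> e_pchar; apply: (big_morph (fun y : R => y ^+ e)) => [y z|].
  exact: exprDn_pchar.
by rewrite expr0n; case/andP: e_pchar => /lt0n_neq0 /negbTE ->.
Qed.

Section Trace.

Variables (F : finFieldType) (r k : nat).
Hypotheses (r_pchar : [pchar F].-nat r) (cardF : #|F| = (r ^ k)%N).

Local Notation tr := (@Tr F r k).

Lemma TrD : {morph tr : x y / x + y}.
Proof.
by move=> x y; rewrite /Tr -big_split; apply: eq_bigr => i _; rewrite exprDn_pchar // pnatX r_pchar.
Qed.

Lemma Tr0 : tr 0 = 0.
Proof. by apply: (@addrI _ (tr 0)); rewrite -TrD !addr0. Qed.

Lemma Tr_sum (I : Type) (s : seq I) (P : pred I) (f : I -> F) :
  tr (\sum_(i <- s | P i) f i) = \sum_(i <- s | P i) tr (f i).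
Proof. exact: (big_morph tr TrD Tr0). Qed.

Lemma expf_card_pow (x : F) : x ^+ (r ^ k) = x.
Proof. by rewrite -cardF expf_card. Qed.

Lemma Tr_expr x : tr (x ^+ r) = tr x.
Proof.
rewrite /Tr; under eq_bigr do rewrite -exprM -expnS.
case: k expf_card_pow => [|k'] xE; first by rewrite !big_ord0.
by rewrite big_ord_recr big_ord_recl /= xE expr1 addrC.
Qed.

Lemma Tr_exprn j x : tr (x ^+ (r ^ j)) = tr x.
Proof. by elim: j => [|j IHj]; rewrite ?expr1 // expnSr exprM Tr_expr. Qed.

Lemma Tr_fixed x : tr x ^+ r = tr x.
Proof.
by rewrite -[RHS]Tr_expr /Tr expr_sum_pchar //; apply: eq_bigr => i _; rewrite exprAC.
Qed.

Lemma TrZ c x : c ^+ r = c -> tr (c * x) = c * tr x.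
Proof.
by move=> cr; rewrite /Tr mulr_sumr; apply: eq_bigr => i _; rewrite exprMn fixed_exprn.
Qed.

Lemma Tr_fixedE c : c ^+ r = c -> tr c = c *+ k.
Proof.
move=> cr; rewrite /Tr (eq_bigr (fun _ => c)) ?sumr_const ?card_ord // => i _.
exact: fixed_exprn.
Qed.

Lemma exists_Tr_neq0 : exists y, tr y != 0.
Proof.
have F_gt1 : (1 < #|F|)%N by apply/card_gt1P; exists 0, 1; rewrite !inE eq_sym oner_neq0.
have k_gt0 : (0 < k)%N by rewrite lt0n; apply: contraTneq F_gt1 => k0; rewrite cardF k0.
have r_gt1 : (1 < r)%N.
  by move: F_gt1; rewrite cardF; case: (r) => [|[|r']] //; rewrite ?exp1n // exp0n.
by apply: exists_sum_expr_neq0 => //; rewrite cardF ltn_exp2l // ltn_predL.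
Qed.

Lemma Tr_nondeg c : (forall x, tr (c * x) = 0) -> c = 0.
Proof.
move=> c_orth; apply/eqP; apply: contraT => c_neq0.
by have [y] := exists_Tr_neq0; rewrite -(mulVKf c_neq0 y) c_orth eqxx.
Qed.

Lemma Tr_onto w d : w != 0 -> d ^+ r = d -> exists x, tr (x * w) = d.
Proof.
move=> w_neq0 dr; have [y tr_y] := exists_Tr_neq0.
exists (d / tr y * y / w); rewrite divfK // TrZ ?divfK //.
by rewrite exprMn exprVn Tr_fixed dr.
Qed.

End Trace.

Arguments TrD {F r k}.
Arguments Tr0 {F r k}.
Arguments Tr_sum {F r k}.
Arguments TrZ {F r k c}.
Arguments Tr_fixedE {F r k c}.

Section Linearized.

Variables (F : finFieldType) (N : nat).
Hypothesis pchar2 : 2%N \in [pchar F].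

Lemma pchar_nat_2exp j : [pchar F].-nat (2 ^ j)%N.
Proof. by rewrite pnatX pnatE // pchar2. Qed.

Lemma lin2D (a : 'I_N -> F) : {morph lin2 a : x y / x + y}.
Proof.
move=> x y; rewrite /lin2 -big_split; apply: eq_bigr => j _.
by rewrite exprDn_pchar ?pchar_nat_2exp // mulrDr.
Qed.

Lemma adj2D (a : 'I_N -> F) : {morph adj2 a : x y / x + y}.
Proof.
move=> x y; rewrite /adj2 -big_split; apply: eq_bigr => j _.
by rewrite mulrDr exprDn_pchar ?pchar_nat_2exp.
Qed.

Hypothesis cardF : #|F| = (2 ^ N)%N.

Lemma Tr_lin2_adj (a : 'I_N -> F) x y :
  Tr 2%N N (y * lin2 a x) = Tr 2%N N (adj2 a y * x).
Proof.
have pchar_nat2 : [pchar F].-nat 2%N by rewrite pnatE.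
rewrite /lin2 /adj2 mulr_sumr mulr_suml !(Tr_sum pchar_nat2); apply: eq_bigr => j _.
rewrite -[RHS](Tr_exprn cardF j) exprMn -exprM -expnD subnK; last exact: ltnW.
by rewrite (expf_card_pow cardF) mulrA [y * _]mulrC.
Qed.

End Linearized.

Section QuadraticTrace.

Variables (F : finFieldType) (m n : nat).
Hypotheses (m_gt0 : (0 < m)%N) (n_odd : odd n) (cardF : #|F| = ((2 ^ m) ^ n)%N).

Local Notation q := (2 ^ m)%N.
Local Notation T := (@Tr F q n).
Local Notation Tr2 := (@Tr F 2%N (m * n)).

Lemma pchar2 : 2%N \in [pchar F].
Proof. by apply: (@card_finPcharP _ _ (m * n)); rewrite // cardF expnM. Qed.

Lemma pchar_q : [pchar F].-nat q.
Proof. exact: pchar_nat_2exp pchar2 m. Qed.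

Lemma pchar_nat2 : [pchar F].-nat 2%N.
Proof. by rewrite pnatE // pchar2. Qed.

Lemma cardF_2pow : #|F| = (2 ^ (m * n))%N.
Proof. by rewrite expnM. Qed.

Lemma addr_eq0_pchar2 (u v : F) : (u + v == 0) = (u == v).
Proof. by rewrite addr_eq0 oppr_pchar2 // pchar2. Qed.

Lemma sqrrD_pchar2 (x y : F) : (x + y) ^+ 2 = x ^+ 2 + y ^+ 2.
Proof. by rewrite exprDn_pchar ?pchar_nat2. Qed.

Lemma mulrn_odd (x : F) j : odd j -> x *+ j = x.
Proof.
by move=> j_odd; rewrite -mulr_natr -(GRing.natr_mod_pchar pchar2) modn2 j_odd mulr1.
Qed.

Lemma expr_q0 : 0 ^+ q = 0 :> F.
Proof. by rewrite expr0n expn_eq0. Qed.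

Lemma fixedD (u c : F) : c ^+ q = c -> ((u + c) ^+ q == u + c) = (u ^+ q == u).
Proof. by move=> cq; rewrite exprDn_pchar ?pchar_q // cq (inj_eq (addIr c)). Qed.

Lemma Tr_fixed_odd c : c ^+ q = c -> T c = c.
Proof. by move=> cq; rewrite (Tr_fixedE cq) mulrn_odd. Qed.

Definition polar (a : F) := a ^+ q + a ^+ (q ^ n.-1).

Lemma TrQD x a :
  T ((x + a) ^+ q.+1) = T (x ^+ q.+1) + T (a ^+ q.+1) + T (x * polar a).
Proof.
have Tx_a : T (x ^+ q * a) = T (x * a ^+ (q ^ n.-1)).
  rewrite -(Tr_exprn cardF n.-1) exprMn -exprM -expnS prednK ?odd_gt0 //.
  by rewrite (expf_card_pow cardF).
rewrite !exprSr exprDn_pchar ?pchar_q // mulrDl !mulrDr !(TrD pchar_q).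
by rewrite Tx_a [a ^+ q * x]mulrC; ring.
Qed.

Lemma polar_eq0 a : (polar a == 0) = (a ^+ q == a).
Proof.
rewrite addr_eq0_pchar2; apply/eqP/eqP => [aq_eq | aq]; last by rewrite aq fixed_exprn.
have a_q2 : a ^+ (q ^ 2) = a.
  rewrite expnS expn1 exprM aq_eq -exprM -expnSr prednK ?odd_gt0 //.
  exact: expf_card_pow cardF a.
rewrite -[in RHS](expf_card_pow cardF a) -[n]odd_double_half n_odd /=.
by rewrite -muln2 mulnC expnS expnM mulnC exprM (fixed_exprn _ a_q2).
Qed.

Definition pp_cond (M : F -> F) := forall a, a != 0 ->
  if a ^+ q == a then M a != a ^+ 2 else M a ^+ q != M a.

Lemma TrQ_addD (M : F -> F) : {morph M : x y / x + y} -> forall x a,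
  T ((x + a) ^+ q.+1) + M (x + a) =
    T (x ^+ q.+1) + M x + (T (a ^+ q.+1) + M a + T (x * polar a)).
Proof. by move=> MD x a; rewrite TrQD MD; ring. Qed.

Section Criterion.

Variable M : F -> F.
Hypothesis MD : {morph M : x y / x + y}.

Lemma pp_cond_of_inj : injective (fun x => T (x ^+ q.+1) + M x) -> pp_cond M.
Proof.
move=> f_inj a a_neq0; case: ifPn => [/eqP aq | a_nfixed].
  apply: contra_neq a_neq0 => Ma; apply: f_inj => /=.
  rewrite Ma exprSr aq -expr2 Tr_fixed_odd; last by rewrite exprAC aq.
  have M0 : M 0 = 0 by apply: (@addrI _ (M 0)); rewrite -MD !addr0.
  by rewrite (addrr_pchar2 pchar2) expr0n /= (Tr0 pchar_q) M0 addr0.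
apply/negP => /eqP Ma_fixed.
(* T maps onto F_q, so some x has T (x * polar a) = T (a ^+ q.+1) + M a,
   and then x and x + a collide. *)
have d_fixed : (T (a ^+ q.+1) + M a) ^+ q = T (a ^+ q.+1) + M a.
  by apply/eqP; rewrite addrC fixedD ?(Tr_fixed pchar_q cardF) // Ma_fixed.
have polar_neq0 : polar a != 0 by rewrite polar_eq0.
have [x Tx] := Tr_onto pchar_q cardF polar_neq0 d_fixed.
have : x + a = x + 0.
  by apply: f_inj; rewrite /= TrQ_addD // Tx (addrr_pchar2 pchar2) !addr0.
by move/addrI/eqP; rewrite (negbTE a_neq0).
Qed.

Lemma inj_of_pp_cond : pp_cond M -> injective (fun x => T (x ^+ q.+1) + M x).
Proof.
move=> M_pp x y fxy; pose a := x + y; have [a0 | a_neq0] := eqVneq a 0.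
  by apply/eqP; rewrite -addr_eq0_pchar2 -/a a0.
have Ma : M a = T (a ^+ q.+1) + T (x * polar a).
  move: fxy; rewrite -[y](addKr_pchar2 pchar2 x) -/a /= TrQ_addD //.
  rewrite -[LHS]addr0 => /addrI/esym/eqP.
  by rewrite addrAC addr_eq0_pchar2 => /eqP.
have := M_pp a a_neq0; rewrite Ma; case: ifPn => [/eqP aq | _] /negP[].
  have /eqP -> : polar a == 0 by rewrite polar_eq0 aq.
  rewrite mulr0 (Tr0 pchar_q) addr0 exprSr aq -expr2 Tr_fixed_odd //.
  by rewrite exprAC aq.
by rewrite fixedD ?(Tr_fixed pchar_q cardF).
Qed.

End Criterion.

Lemma pp_cond_ker (M : F -> F) :
  pp_cond M -> kerF M \subset [set x : F | x ^+ q == x].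
Proof.
move=> M_pp; apply/subsetP => x; rewrite !inE => /eqP Mx0.
have [-> | x_neq0] := eqVneq x 0; first by rewrite expr_q0.
by have := M_pp x x_neq0; case: ifP => // _; rewrite Mx0 expr_q0 eqxx.
Qed.

Lemma pp_cond_card_ker (M : F -> F) : pp_cond M -> (#|kerF M| <= q)%N.
Proof.
move=> M_pp; apply: leq_trans (subset_leq_card (pp_cond_ker M_pp)) _.
by apply: card_expr_fixed; rewrite -{1}(expn0 2) ltn_exp2l.
Qed.

Section FixingSubfield.

Variable lam : F -> F.
Hypotheses (lam_fixed : forall c, c ^+ q = c -> lam c = c) (lam_inj : injective lam).

Lemma lam_fixedE x : (lam x ^+ q == lam x) = (x ^+ q == x).
Proof.
apply/eqP/eqP => [lxq | xq]; last by rewrite lam_fixed.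
by rewrite -(lam_inj (lam_fixed lxq)).
Qed.

Lemma lam_eq0 x : (lam x == 0) = (x == 0).
Proof. by rewrite -[x == 0](inj_eq lam_inj) (lam_fixed expr_q0). Qed.

Lemma pp_cond_compr (L : F -> F) : pp_cond L -> pp_cond (fun x => L (lam x)).
Proof.
move=> L_pp a a_neq0; have := L_pp (lam a); rewrite lam_eq0 lam_fixedE => /(_ a_neq0).
by case: ifP => // /eqP aq; rewrite lam_fixed.
Qed.

Lemma pp_cond_compl (L : F -> F) : pp_cond L -> pp_cond (fun x => lam (L x)).
Proof.
move=> L_pp a a_neq0; have := L_pp a a_neq0; case: ifP => [/eqP aq | _].
  by apply: contra_neq => La; apply: lam_inj; rewrite La lam_fixed // exprAC aq.
by rewrite lam_fixedE.
Qed.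

End FixingSubfield.

Section TraceShift.

Variables (L lam : F -> F).
Hypotheses (LD : {morph L : x y / x + y}) (lamD : {morph lam : x y / x + y}).
Hypothesis lam_regular : forall v, v ^+ q = v -> v + T (lam v) = 0 -> v = 0.

Lemma pp_cond_shift_arg :
  pp_cond L -> pp_cond (fun x => L x + L (T (lam x)) + T (lam x) ^+ 2).
Proof.
move=> L_pp a a_neq0; rewrite -LD; set t := T (lam a).
have t_fixed : t ^+ q = t by apply: Tr_fixed pchar_q cardF _.
have at_neq0 : a + t != 0.
  apply: contra_neq a_neq0 => at0; apply: lam_regular (at0); apply/eqP.
  by rewrite -(fixedD a t_fixed) at0 expr_q0.
have := L_pp _ at_neq0; rewrite (fixedD a t_fixed); case: ifP => _.
  by apply: contra_neq => La; rewrite sqrrD_pchar2 -La (addrK_pchar2 pchar2).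
have t2_fixed : (t ^+ 2) ^+ q = t ^+ 2 by rewrite exprAC t_fixed.
by rewrite (fixedD _ t2_fixed).
Qed.

Lemma pp_cond_shift_val :
  pp_cond L -> pp_cond (fun x => L x + T (lam (L x)) + T (lam (x ^+ 2))).
Proof.
move=> L_pp a a_neq0; rewrite -addrA; set s := _ + T (lam (a ^+ 2)).
have s_fixed : s ^+ q = s by apply/eqP; rewrite fixedD ?(Tr_fixed pchar_q cardF).
have := L_pp a a_neq0; rewrite fixedD //; case: ifP => // _.
apply: contra_neq => La_s; set w := L a + a ^+ 2.
have w_s : w + s = 0 by rewrite /w addrAC La_s (addrr_pchar2 pchar2).
have Tw : T (lam w) = s by rewrite lamD (TrD pchar_q).
have w0 : w = 0.
  apply: lam_regular; last by rewrite Tw.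
  by move/eqP: w_s; rewrite addr_eq0_pchar2 => /eqP ->.
by apply/eqP; rewrite -addr_eq0_pchar2 -/w w0.
Qed.

End TraceShift.

Lemma Tr2_mul_Tr c y : c ^+ q = c -> Tr2 (c * T y) = Tr2 (c * y).
Proof.
move=> cq; rewrite mulr_sumr (Tr_sum pchar_nat2).
rewrite (eq_bigr (fun _ => Tr2 (c * y))) ?sumr_const ?card_ord ?mulrn_odd // => i _.
by rewrite -{1}(fixed_exprn i cq) -exprMn -expnM (Tr_exprn cardF_2pow).
Qed.

Section Adjoint.

Variables (lam lam' : F -> F).
Hypotheses (lamD : {morph lam : x y / x + y}) (lam'D : {morph lam' : x y / x + y}).
Hypothesis lam_adj : forall x y, Tr2 (y * lam x) = Tr2 (lam' y * x).

Lemma adjoint_fixed :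
  (forall x, T (lam' x) = T x) -> forall c, c ^+ q = c -> lam c = c.
Proof.
move=> Tlam' c cq; apply/eqP; rewrite -addr_eq0_pchar2; apply/eqP.
apply: (Tr_nondeg cardF_2pow) => x; rewrite mulrDl (TrD pchar_nat2) mulrC lam_adj.
by rewrite mulrC -(Tr2_mul_Tr (lam' x) cq) Tlam' Tr2_mul_Tr // (addrr_pchar2 pchar2).
Qed.

Lemma adjoint_inj : injective lam' -> injective lam.
Proof.
move=> lam'_inj; have [g _ gK] := injF_bij lam'_inj.
apply: morphD_inj lamD _ => x lx0; apply: (Tr_nondeg cardF_2pow) => y.
by rewrite -[y]gK mulrC -lam_adj lx0 mulr0 (Tr0 pchar_nat2).
Qed.

Lemma adjoint_ker_inj :
  [set lam' x | x in kerF T] = kerF T -> (forall x, T (lam' x) = T x) -> injective lam'.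
Proof.
move=> lam'_ker Tlam'; have lam'0 : lam' 0 = 0.
  by apply: (@addrI _ (lam' 0)); rewrite -lam'D !addr0.
have lam'_inj_ker : {in kerF T &, injective lam'}.
  by apply/imset_injP; rewrite lam'_ker.
have ker0 : 0 \in kerF T by rewrite inE (Tr0 pchar_q).
apply: morphD_inj lam'D _ => x lx0.
have x_ker : x \in kerF T by rewrite inE -Tlam' lx0 (Tr0 pchar_q).
by apply: (lam'_inj_ker x 0 x_ker ker0); rewrite lx0 lam'0.
Qed.

Lemma adjoint_regular :
  (forall x, x ^+ q = x -> (x + T (lam' x)) ^+ q = x + T (lam' x)) ->
  {in [pred x : F | x ^+ q == x] &, injective (fun x => x + T (lam' x))} ->
  forall v, v ^+ q = v -> v + T (lam v) = 0 -> v = 0.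
Proof.
move=> phi_fixed phi_inj v vq v_reg.
pose S := [set x : F | x ^+ q == x].
have phiS : [set x + T (lam' x) | x in S] = S.
  apply/eqP; rewrite eqEcard card_in_imset ?leqnn ?andbT; last first.
    by move=> x y; rewrite !inE; apply: phi_inj.
  apply/subsetP => _ /imsetP[x xS ->]; move: xS; rewrite !inE => /eqP xq.
  by rewrite phi_fixed.
have Tlam_v : T (lam v) = v by apply/esym/eqP; rewrite -addr_eq0_pchar2 v_reg.
have v_orth u : u ^+ q = u -> Tr2 (v * (u + T (lam' u))) = 0.
  move=> uq; rewrite mulrDr (TrD pchar_nat2) Tr2_mul_Tr // [v * lam' u]mulrC.
  rewrite -lam_adj -(Tr2_mul_Tr (lam v) uq) Tlam_v [v * u]mulrC.
  exact: addrr_pchar2 pchar2 _.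
(* x |-> x + T (lam' x) maps F_q onto F_q, so v is orthogonal to F_q, hence to
   everything since Tr2 (v x) = Tr2 (v (T x)). *)
apply: (Tr_nondeg cardF_2pow) => x; rewrite -Tr2_mul_Tr //.
have : T x \in S by rewrite inE (Tr_fixed pchar_q cardF).
by rewrite -phiS => /imsetP[u]; rewrite inE => /eqP uq ->; apply: v_orth.
Qed.

End Adjoint.

End QuadraticTrace.

Theorem mainTheorem9 (F : finFieldType) (m n : nat)
  (hm : (1 <= m)%N) (hn : odd n) (hF : #|F| = ((2 ^ m) ^ n)%N)
  (a b : 'I_(m * n) -> F) :
  let q := (2 ^ m)%N in
  let L := lin2 a in
  let lam := lin2 b in
  let lam' := adj2 b in
  let T := Tr q n in
  bijective (fun x : F => T (x ^+ (q + 1)) + L x) ->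
  (#|kerF L| <= q)%N /\
  ((([set lam' x | x in kerF T] = kerF T) /\ (forall x, T (lam' x) = T x)) ->
     bijective (fun x : F => T (x ^+ (q + 1)) + L (lam x)) /\
     bijective (fun x : F => T (x ^+ (q + 1)) + lam (L x))) /\
  (((forall x : F, x ^+ q = x -> (x + T (lam' x)) ^+ q = x + T (lam' x)) /\
    {in [pred x : F | x ^+ q == x] &, injective (fun x : F => x + T (lam' x))}) ->
     bijective (fun x : F => T (x ^+ (q + 1)) + L x + L (T (lam x)) + (T (lam x)) ^+ 2) /\
     bijective (fun x : F => T (x ^+ (q + 1)) + L x + T (lam (L x)) + T (lam (x ^+ 2)))).
Proof.
cbv zeta; rewrite addn1 => L_bij.
have F2 := pchar2 hF; have LD := lin2D F2 a; have lamD := lin2D F2 b.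
have lam_adj := Tr_lin2_adj F2 (cardF_2pow hF) b.
have pp_inj := inj_of_pp_cond hn hF.
have L_pp : pp_cond m (lin2 a) by apply/(pp_cond_of_inj hn hF LD)/bij_inj.
split; first exact: pp_cond_card_ker.
split=> [[lam'_ker Tlam'] | [phi_fixed phi_inj]].
  have lam_fixed := adjoint_fixed hn hF lam_adj Tlam'.
  have lam_inj := adjoint_inj hF lamD lam_adj (adjoint_ker_inj hF (adj2D F2 b) lam'_ker Tlam').
  split; apply/injF_bij/pp_inj.
  - by move=> x y; rewrite lamD LD.
  - exact: pp_cond_compr.
  - by move=> x y; rewrite LD lamD.
  - exact: pp_cond_compl.
have lam_reg := adjoint_regular hn hF lam_adj phi_fixed phi_inj.
split; apply: injF_bij.
  apply: eq_inj (pp_inj _ _ (pp_cond_shift_arg hF LD lam_reg L_pp)) _ => [x y | x /=].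
    by rewrite lamD (TrD (pchar_q hF)) !LD (sqrrD_pchar2 hF); ring.
  by rewrite !addrA.
apply: eq_inj (pp_inj _ _ (pp_cond_shift_val hF lamD lam_reg L_pp)) _ => [x y | x /=].
  by rewrite LD (sqrrD_pchar2 hF) !lamD !(TrD (pchar_q hF)); ring.
by rewrite !addrA.
Qed.
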